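(* For $t\in[0,1]$ let $f_t\in\mathrm{Bir}(\mathbb{P}^2_{\mathbb{C}})$ be $f_t\colon[x_0:x_1:x_2]\dashrightarrow[x_0^2:x_0x_1:x_0x_2+t(1-t)x_1^2]$. Let $\sigma\colon[-1,1]\to\mathrm{PSU}(3)$ be a continuous surjective map, regard $\mathrm{PSU}(3)\subset\mathrm{PGL}_3(\mathbb{C})=\mathrm{Aut}(\mathbb{P}^2_{\mathbb{C}})\subset\mathrm{Bir}(\mathbb{P}^2_{\mathbb{C}})$, let $\hat\sigma\colon(0,1]\to\mathrm{PSU}(3)$, $\hat\sigma(t)=\sigma(\sin(1))^{-1}\sigma(\sin(1/t))$, and $\rho\colon(0,1]\to\mathrm{Bir}(\mathbb{P}^2_{\mathbb{C}})$, $\rho(t)=\hat\sigma(t)\circ f_t\circ\hat\sigma(t)^{-1}$. Then $\rho$ extends to a continuous map $\hat\rho\colon[0,1]\to\mathrm{Bir}(\mathbb{P}^2_{\mathbb{C}})$ with $\hat\rho(0)=\mathrm{id}$. Moreover, the map $H\colon[0,1]\times[0,1]\to\mathrm{Bir}(\mathbb{P}^2_{\mathbb{C}})$ given by $H(s,t)=\hat\rho(t)$ for $t\geq s$ and $H(s,t)=\hat\sigma(s)\circ f_t\circ\hat\sigma(s)^{-1}$ for $t<s$ is continuous; in particular $\hat\rho$ is homotopic to the map $t\mapsto f_t$.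
   Context: All topologies on $\mathrm{Bir}(\mathbb{P}^2_{\mathbb{C}})$ are the Euclidean topology: for $d\geq1$, $W_d(\mathbb{C})$ is the projective space of classes of non-zero triples of degree-$d$ homogeneous polynomials in $\mathbb{C}[x_0,x_1,x_2]$ modulo scalars with its Euclidean topology; $H_d(\mathbb{C})\subset W_d(\mathbb{C})$ the subset defining birational maps; the set $\mathrm{Bir}(\mathbb{P}^2_{\mathbb{C}})_{\leq d}$ of maps of degree $\leq d$ gets the quotient topology via the natural surjection $H_d(\mathbb{C})\to\mathrm{Bir}(\mathbb{P}^2_{\mathbb{C}})_{\leq d}$, and $\mathrm{Bir}(\mathbb{P}^2_{\mathbb{C}})$ the inductive limit topology. *)

From HB Require Import structures.
From mathcomp Require Import all_boot all_order all_algebra.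
From mathcomp Require Import complex.
From mathcomp Require Import reals trigo.
Set Implicit Arguments. Unset Strict Implicit. Unset Printing Implicit Defensive.
Import Order.TTheory GRing.Theory Num.Theory.
Local Open Scope ring_scope.

Section BirDefs.
Variable R : realType.
Local Notation C := (R[i]).

(* Monomials of degree d in x0,x1,x2: pairs (a,b) = exponents of x1,x2,
   the exponent of x0 being d - a - b. *)
Definition mon (d : nat) : finType := {ab : 'I_d.+1 * 'I_d.+1 | (ab.1 + ab.2 <= d)%N}.

Definition trip (d : nat) := 'I_3 -> mon d -> C.

(* Representatives of elements of Bir(P^2): a degree d and a triple of degree d. *)
Definition BirRep := {d : nat & trip d}.

Definition pt := 'I_3 -> C.

Definition evpoly (d : nat) (c : mon d -> C) (x : pt) : C :=
  \sum_(m : mon d)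
     c m * x ord0 ^+ (d - (val (val m).1 + val (val m).2))
         * x (lift ord0 ord0) ^+ val (val m).1
         * x (lift ord0 (lift ord0 ord0)) ^+ val (val m).2.

Definition ev (F : BirRep) (x : pt) : pt := fun i => evpoly (projT2 F i) x.

Definition nonzero_pt (y : pt) := exists i, y i != 0.

Definition same_map (F G : BirRep) : Prop :=
  forall x i j, ev F x i * ev G x j = ev F x j * ev G x i.

(* G o F = h * id for a nonzero polynomial h (as polynomial identities,
   tested pointwise over the infinite field C) *)
Definition comp_is_id (G F : BirRep) : Prop :=
  (forall x i j, ev G (ev F x) i * x j = ev G (ev F x) j * x i) /\
  (exists x, nonzero_pt (ev G (ev F x))).

Definition birational (F : BirRep) : Prop :=
  (exists i m, projT2 F i m != 0) /\
  exists G : BirRep, comp_is_id G F /\ comp_is_id F G.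

Definition vopen (I : finType) (O : (I -> C) -> Prop) : Prop :=
  forall v, O v -> exists e : C, 0 < e /\
    forall w, (forall i, `|w i - v i| < e) -> O w.

Definition coords (d : nat) (F : trip d) : 'I_3 * mon d -> C :=
  fun p => F p.1 p.2.

(* Open subsets of Bir(P^2) (inductive limit of quotient topologies),
   given as saturated predicates on birational representatives. *)
Definition bir_open (U : BirRep -> Prop) : Prop :=
  (forall F G, birational F -> birational G -> same_map F G -> U F -> U G) /\
  forall d : nat, exists O : ('I_3 * mon d -> C) -> Prop, vopen O /\
    forall F : trip d, birational (existT _ d F) ->
      (U (existT _ d F) <-> O (coords F)).

Definition bir_cont_on (a b : R) (g : R -> BirRep) : Prop :=
  (forall t, a <= t <= b -> birational (g t)) /\
  forall U, bir_open U -> forall t, a <= t <= b -> U (g t) ->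
    exists e : R, 0 < e /\ forall t', a <= t' <= b -> `|t' - t| < e -> U (g t').

Definition bir_cont2 (g : R -> R -> BirRep) : Prop :=
  (forall s t, 0 <= s <= 1 -> 0 <= t <= 1 -> birational (g s t)) /\
  forall U, bir_open U -> forall s t, 0 <= s <= 1 -> 0 <= t <= 1 -> U (g s t) ->
    exists e : R, 0 < e /\ forall s' t', 0 <= s' <= 1 -> 0 <= t' <= 1 ->
      `|s' - s| < e -> `|t' - t| < e -> U (g s' t').

Definition mcoords (A : 'M[C]_3) : 'I_3 * 'I_3 -> C := fun p => A p.1 p.2.

(* open subsets of the projective space P(C^I): C^*-invariant sets of
   nonzero vectors that are open in C^I *)
Definition proj_open (I : finType) (S : (I -> C) -> Prop) : Prop :=
  (forall v, S v -> exists i, v i != 0) /\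
  (forall v (c : C), c != 0 -> S v -> S (fun i => c * v i)) /\ vopen S.

Definition conjtr (U : 'M[C]_3) : 'M[C]_3 := map_mx Num.conj U^T.
Definition SU3 (U : 'M[C]_3) : Prop := U *m conjtr U = 1%:M /\ \det U = 1.
(* A represents an element of PSU(3) ⊂ PGL_3(C) *)
Definition is_psu (A : 'M[C]_3) : Prop :=
  exists (c : C) (U : 'M[C]_3), c != 0 /\ SU3 U /\ A = c *: U.

(* sigma : [-1,1] -> PSU(3), continuous (PSU(3) with the topology induced from
   PGL_3(C) ⊂ P^8) and surjective, given by representative matrices *)
Definition psu_path (sigma : R -> 'M[C]_3) : Prop :=
  (forall s, -1 <= s <= 1 -> is_psu (sigma s)) /\
  (forall S, proj_open S -> forall s, -1 <= s <= 1 -> S (mcoords (sigma s)) ->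
     exists e : R, 0 < e /\ forall s', -1 <= s' <= 1 -> `|s' - s| < e ->
       S (mcoords (sigma s'))) /\
  (forall U, SU3 U -> exists s, -1 <= s <= 1 /\ exists c : C, c != 0 /\ sigma s = c *: U).

Definition lin (A : 'M[C]_3) (x : pt) : pt := fun i => \sum_j A i j * x j.

Definition fmap (t : R) (x : pt) : pt :=
  fun i => match val i with
           | 0 => x ord0 ^+ 2
           | 1 => x ord0 * x (lift ord0 ord0)
           | _ => x ord0 * x (lift ord0 (lift ord0 ord0))
                  + (real_complex R (t * (1 - t))) * x (lift ord0 ord0) ^+ 2
           end.

Definition sighat (sigma : R -> 'M[C]_3) (t : R) : 'M[C]_3 :=
  invmx (sigma (sin 1)) *m sigma (sin (t^-1)).

Definition conjf (A : 'M[C]_3) (t : R) (x : pt) : pt :=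
  lin A (fmap t (lin (invmx A) x)).

Definition represents (F : BirRep) (phi : pt -> pt) : Prop :=
  forall x, ev F x = phi x.

Definition same_as (F : BirRep) (phi : pt -> pt) : Prop :=
  forall x i j, ev F x i * phi x j = ev F x j * phi x i.

End BirDefs.

From Pilot Require Import Defs.
(* If [A A^* = r] with [r != 0], then [A^-1] is a multiple of [A^*], so
   [A f_t A^-1] is represented by the quadratic triple [x |-> A f_t(A^* x)]: its
   coefficients are polynomials in the entries of [A] and in [t], and it is
   birational, the same construction with [-t (1 - t)] in place of [t (1 - t)]
   being its inverse.  Since [f_0 x = x_0 x] is the identity of [P^2], so is
   every conjugate of [f_0].
   The homotopy is [H(s, t) = sighat(m) f_t sighat(m)^-1] with [m = max(s, t)]
   (the identity when [m = 0]).  Away from [(0, 0)] it is continuous because its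
   coefficients depend continuously on [sigma(sin(1/m))], up to the scalar by
   which [PGL_3] sees [PSU(3)], and on [t].  At [(0, 0)], a neighbourhood of the
   identity contains every conjugate of [f_t] by [sigma(y)] once [t] is small
   enough, uniformly in [y] by compactness of [[-1, 1]]. *)

From HB Require Import structures.
From mathcomp Require Import all_boot all_order all_algebra.
From mathcomp Require Import complex.
From mathcomp Require Import reals trigo.
From mathcomp Require Import ring lra.
From mathcomp Require Import classical_sets topology normedtype.
From mathcomp Require boolp.
Import numFieldNormedType.Exports.
(* [topology] shadows [fmap] (the map [f_t] of [Defs]) by the image of a filter. *)
Import Pilot.Defs.
Import Order.TTheory GRing.Theory Num.Theory Normc.
Set Implicit Arguments. Unset Strict Implicit. Unset Printing Implicit Defensive.
Local Open Scope ring_scope.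
Local Open Scope complex_scope.

Section ComplexModulus.
Variable R : realType.
Implicit Types (x y z : R[i]) (r e : R).

Lemma normcE z : `|z| = (normc z)%:C.
Proof. by case: z. Qed.

Lemma normc_ge0 z : 0 <= normc z.
Proof. by case: z => a b; exact: sqrtr_ge0. Qed.

Lemma normc_eq0 z : (normc z == 0) = (z == 0).
Proof. by apply/eqP/eqP => [/eq0_normc | ->] //; exact: normc0. Qed.

Lemma normc_conj z : normc (Num.conj z) = normc z.
Proof. by apply: (@complexI R); rewrite -!normcE norm_conjC. Qed.

Lemma normc_real r : normc r%:C = `|r|.
Proof. by rewrite /normc /= expr0n /= addr0 sqrtr_sqr. Qed.

Lemma ltc_norm z e : (`|z| < e%:C) = (normc z < e).
Proof. by rewrite normcE ltcR. Qed.

Lemma gt0_complex (e : R[i]) : 0 < e -> e = (complex.Re e)%:C /\ 0 < complex.Re e.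
Proof. by case: e => a b; rewrite ltcE /= => /andP [/eqP -> ]. Qed.

End ComplexModulus.

Section QuadraticMaps.
Variable R : realType.
Local Notation C := R[i].
Local Notation pt := (pt R).
Local Notation i1 := (lift ord0 (ord0 : 'I_2)).
Local Notation i2 := (lift ord0 (lift ord0 (ord0 : 'I_1))).

Lemma ord3P (i : 'I_3) : [\/ i = ord0, i = i1 | i = i2].
Proof.
by case: i => [[|[|[|//]]] h]; [constructor 1 | constructor 2 | constructor 3];
  apply: val_inj.
Qed.

Lemma sum3 (F : 'I_3 -> C) : \sum_k F k = F ord0 + F i1 + F i2.
Proof. by rewrite !big_ord_recl big_ord0 addr0 addrA. Qed.

(* [t (1 - t)] is generalized to any [a], so that [fa (- a)] inverts [fa a]. *)
Definition fa (a : C) (x : pt) : pt :=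
  fun i => match val i with
           | 0 => x ord0 ^+ 2
           | 1 => x ord0 * x i1
           | _ => x ord0 * x i2 + a * x i1 ^+ 2
           end.

Lemma fmapE (t : R) : fmap t = fa (t * (1 - t))%:C.
Proof. by []. Qed.

Lemma faZ a c (x : pt) : fa a (fun i => c * x i) = fun i => c ^+ 2 * fa a x i.
Proof. by apply: boolp.funext => i; case: (ord3P i) => ->; rewrite /fa /=; ring. Qed.

Lemma faNK a (x : pt) : fa (- a) (fa a x) = fun i => x ord0 ^+ 3 * x i.
Proof. by apply: boolp.funext => i; case: (ord3P i) => ->; rewrite /fa /=; ring. Qed.

Lemma fa0 (x : pt) : fa 0 x = fun i => x ord0 * x i.
Proof. by apply: boolp.funext => i; case: (ord3P i) => ->; rewrite /fa /=; ring. Qed.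

Definition monv (d : nat) (m : mon d) (x : pt) : C :=
  x ord0 ^+ (d - (val (val m).1 + val (val m).2))
    * x i1 ^+ val (val m).1 * x i2 ^+ val (val m).2.

Lemma evpolyE d (c : mon d -> C) x : evpoly c x = \sum_m c m * monv m x.
Proof. by apply: eq_bigr => m _; rewrite /monv !mulrA. Qed.

Lemma evpolyD d (c c' : mon d -> C) x :
  evpoly (fun m => c m + c' m) x = evpoly c x + evpoly c' x.
Proof. by rewrite !evpolyE -big_split; apply: eq_bigr => m _; rewrite mulrDl. Qed.

Lemma evpolyZ d a (c : mon d -> C) x :
  evpoly (fun m => a * c m) x = a * evpoly c x.
Proof. by rewrite !evpolyE mulr_sumr; apply: eq_bigr => m _; rewrite mulrA. Qed.

Lemma evpoly_sum d (I : finType) (c : I -> mon d -> C) x :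
  evpoly (fun m => \sum_k c k m) x = \sum_k evpoly (c k) x.
Proof.
rewrite evpolyE (eq_bigr (fun m => \sum_k c k m * monv m x)); last first.
  by move=> m _; rewrite mulr_suml.
by rewrite exchange_big; apply: eq_bigr => k _; rewrite evpolyE.
Qed.

Definition mon2 (i j : 'I_3) : mon 2 :=
  insubd (exist _ (ord0, ord0) isT : mon 2)
    (inord ((val i == 1) + (val j == 1)), inord ((val i == 2) + (val j == 2))).

Lemma monv_mon2 i j x : monv (mon2 i j) x = x i * x j.
Proof.
by case: (ord3P i) => ->; case: (ord3P j) => ->;
  rewrite /monv /mon2 /insubd insubT /= ?inordK //= ?expr0 ?expr1 ?mul1r ?mulr1 // mulrC.
Qed.

Definition prod_coefs (u w : 'I_3 -> C) : mon 2 -> C :=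
  fun m => \sum_i \sum_j (if mon2 i j == m then u i * w j else 0).

Lemma evpoly_prod_coefs u w x :
  evpoly (prod_coefs u w) x = (\sum_i u i * x i) * (\sum_j w j * x j).
Proof.
rewrite /prod_coefs evpoly_sum mulr_suml; apply: eq_bigr => i _.
rewrite evpoly_sum mulr_sumr; apply: eq_bigr => j _.
rewrite evpolyE (bigD1 (mon2 i j)) //= eqxx big1 ?addr0.
  by rewrite monv_mon2 mulrACA.
by move=> m /negbTE hm; rewrite eq_sym hm mul0r.
Qed.

Lemma conjtrZ c (A : 'M[C]_3) : conjtr (c *: A) = Num.conj c *: conjtr A.
Proof. by apply/matrixP => i j; rewrite !mxE rmorphM. Qed.

Lemma conjtrM (A B : 'M[C]_3) : conjtr (A *m B) = conjtr B *m conjtr A.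
Proof. by rewrite /conjtr trmx_mul map_mxM. Qed.

Lemma conjtrK : involutive (@conjtr R).
Proof. by move=> A; apply/matrixP => i j; rewrite !mxE conjCK. Qed.

Lemma conjtr1 : conjtr (1%:M : 'M[C]_3) = 1%:M.
Proof. by rewrite /conjtr trmx1 map_mx1. Qed.

Lemma linZ A c (x : pt) : lin A (fun i => c * x i) = fun i => c * lin A x i.
Proof.
apply: boolp.funext => i; rewrite /lin mulr_sumr.
by apply: eq_bigr => j _; rewrite mulrCA.
Qed.

Lemma lin_scalemx A c (x : pt) : lin (c *: A) x = fun i => c * lin A x i.
Proof.
apply: boolp.funext => i; rewrite /lin mulr_sumr.
by apply: eq_bigr => j _; rewrite mxE mulrA.
Qed.

Lemma lin_mulmx A B (x : pt) : lin A (lin B x) = lin (A *m B) x.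
Proof.
apply: boolp.funext => i; rewrite /lin.
rewrite (eq_bigr (fun j => \sum_k A i j * B j k * x k)); last first.
  by move=> j _; rewrite mulr_sumr; apply: eq_bigr => k _; rewrite mulrA.
by rewrite exchange_big; apply: eq_bigr => k _; rewrite mxE mulr_suml.
Qed.

Lemma lin_scalar r (x : pt) : lin r%:M x = fun i => r * x i.
Proof.
apply: boolp.funext => i; rewrite /lin (bigD1 i) //= big1 ?addr0.
  by rewrite mxE eqxx mulr1n.
by move=> j /negbTE hj; rewrite mxE eq_sym hj mulr0n mul0r.
Qed.

Lemma lin1 (x : pt) : lin 1%:M x = x.
Proof. by rewrite lin_scalar; apply: boolp.funext => i; rewrite mul1r. Qed.

(* Represents [A f_a A^-1] when [A] is scaled unitary, [A^-1] being then a
   multiple of [A^*]. *)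
Definition conj_trip (A : 'M[C]_3) (a : C) : trip R 2 := fun i m =>
  \sum_k A i k * prod_coefs (conjtr A ord0) (conjtr A k) m
  + a * A i i2 * prod_coefs (conjtr A i1) (conjtr A i1) m.

Definition conj_rep A a : BirRep R := existT _ 2 (conj_trip A a).

Lemma ev_conj_rep A a x : ev (conj_rep A a) x = lin A (fa a (lin (conjtr A) x)).
Proof.
apply: boolp.funext => i.
rewrite /ev /= /conj_trip evpolyD evpoly_sum evpolyZ evpoly_prod_coefs.
under eq_bigr do rewrite evpolyZ evpoly_prod_coefs.
by rewrite /lin !sum3 /fa /= !sum3; ring.
Qed.

Lemma ev_conj_repZ A c a x :
  ev (conj_rep (c *: A) a) x = fun i => c * Num.conj c ^+ 2 * ev (conj_rep A a) x i.
Proof.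
rewrite !ev_conj_rep conjtrZ !lin_scalemx faZ linZ.
by apply: boolp.funext => i; rewrite mulrA.
Qed.

End QuadraticMaps.

Section ScaledUnitary.
Variable R : realType.
Local Notation C := R[i].
Implicit Types (A B : 'M[C]_3) (r s c : C).

Definition scaled_unitary A r := r != 0 /\ A *m conjtr A = r%:M /\ conjtr A *m A = r%:M.

Lemma scaled_unitary_inv_r A r :
  r != 0 -> A *m conjtr A = r%:M -> A *m (r^-1 *: conjtr A) = 1%:M.
Proof. by move=> r0 h; rewrite -scalemxAr h scale_scalar_mx mulVf. Qed.

Lemma scaled_unitaryP A r : r != 0 -> A *m conjtr A = r%:M -> scaled_unitary A r.
Proof.
move=> r0 h; split=> //; split=> //.
have := mulmx1C (scaled_unitary_inv_r r0 h); rewrite -scalemxAl.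
move=> /(congr1 (fun M => r *: M)).
by rewrite scalerA mulfV // scale1r scalemx1.
Qed.

Lemma psu_scaled_unitary A : is_psu A -> exists r, scaled_unitary A r.
Proof.
case=> c [U [c0 [[hU _] ->]]]; exists (c * Num.conj c).
apply: scaled_unitaryP; first by rewrite mulf_neq0 ?conjC_eq0.
by rewrite conjtrZ -scalemxAl -scalemxAr hU scalerA scalemx1.
Qed.

Lemma scaled_unitary1 : scaled_unitary 1%:M 1.
Proof. by split; rewrite ?oner_eq0 // conjtr1 mul1mx. Qed.

Lemma scaled_unitaryM A B r s :
  scaled_unitary A r -> scaled_unitary B s -> scaled_unitary (A *m B) (r * s).
Proof.
move=> [r0 [hA _]] [s0 [hB _]]; apply: scaled_unitaryP; first by rewrite mulf_neq0.
rewrite conjtrM mulmxA -(mulmxA A) hB mul_mx_scalar -scalemxAl hA.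
by rewrite scale_scalar_mx mulrC.
Qed.

Lemma scaled_unitary_conjtr A r : scaled_unitary A r -> scaled_unitary (conjtr A) r.
Proof. by move=> [r0 [h1 h2]]; split => //; rewrite conjtrK. Qed.

Lemma scaled_unitaryZ A r c :
  scaled_unitary A r -> c != 0 -> scaled_unitary (c *: A) (c * Num.conj c * r).
Proof.
move=> [r0 [h _]] c0; apply: scaled_unitaryP; first by rewrite !mulf_neq0 ?conjC_eq0.
by rewrite conjtrZ -scalemxAl -scalemxAr h scalerA scale_scalar_mx.
Qed.

Lemma scaled_unitary_unit A r : scaled_unitary A r -> A \in unitmx.
Proof. by move=> [r0 [h _]]; case: (mulmx1_unit (scaled_unitary_inv_r r0 h)). Qed.

Lemma scaled_unitary_invmx A r : scaled_unitary A r -> invmx A = r^-1 *: conjtr A.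
Proof.
move=> hA; have [r0 [h _]] := hA.
rewrite -[invmx A]mulmx1 -(scaled_unitary_inv_r r0 h) mulmxA.
by rewrite mulVmx ?mul1mx //; apply: scaled_unitary_unit hA.
Qed.

Lemma scaled_unitary_neq0 A r : scaled_unitary A r -> exists p, mcoords A p != 0.
Proof.
move=> [r0 [h _]]; apply: boolp.contrapT => hn.
have A0 : A = 0.
  apply/matrixP => i j; rewrite mxE; apply/eqP; apply: contraT => hij.
  by exfalso; apply: hn; exists (i, j).
have := congr1 (fun M : 'M[C]_3 => M ord0 ord0) h.
by rewrite A0 mul0mx !mxE eqxx mulr1n => /esym/eqP; rewrite (negbTE r0).
Qed.

End ScaledUnitary.

Section Birationality.
Variable R : realType.
Local Notation C := R[i].
Local Notation pt := (pt R).
Implicit Types (A : 'M[C]_3) (F G : BirRep R).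

Lemma same_map_refl F : same_map F F.
Proof. by move=> x i j; rewrite mulrC. Qed.

Lemma same_map_sym F G : same_map F G -> same_map G F.
Proof. by move=> h x i j; rewrite mulrC h mulrC. Qed.

Lemma same_map_scale F G (mu : C) :
  (forall x i, ev F x i = mu * ev G x i) -> same_map F G.
Proof. by move=> h x i j; rewrite !h; ring. Qed.

Lemma same_as_same_map F G (phi : pt -> pt) (mu : C) : mu != 0 ->
  (forall x i, phi x i = mu * ev G x i) -> same_as F phi -> same_map F G.
Proof.
move=> mu0 hphi hF x i j; apply: (mulfI mu0).
by have := hF x i j; rewrite !hphi => E; rewrite mulrCA E; ring.
Qed.

Lemma ev_neq0_coef F x i : ev F x i != 0 -> exists i m, projT2 F i m != 0.
Proof.
move=> hF; apply: boolp.contrapT => h; move: hF; rewrite /ev evpolyE big1 ?eqxx // => m _.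
have /eqP -> : projT2 F i m == 0 by apply/negPn/negP => hm; apply: h; exists i, m.
by rewrite mul0r.
Qed.

Definition e0 : pt := fun i => (i == ord0)%:R.

Lemma ev_conj_rep_e0 A r a : scaled_unitary A r ->
  ev (conj_rep A a) (lin A e0) = (fun i => r ^+ 2 * lin A e0 i) /\ exists i, lin A e0 i != 0.
Proof.
move=> [r0 [_ h]]; have E : lin (conjtr A) (lin A e0) = fun i => r * e0 i.
  by rewrite lin_mulmx h lin_scalar.
have fa_e0 : fa a e0 = e0.
  apply: boolp.funext => k; case: (ord3P k) => ->;
  by rewrite /fa /e0 /= ?expr2 ?mulr0 ?mulr1 ?addr0.
split; first by rewrite ev_conj_rep E faZ fa_e0 linZ.
apply/existsP; apply: contraT; rewrite negb_exists => /forallP h0.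
have : lin (conjtr A) (lin A e0) ord0 = 0.
  by rewrite {1}/lin big1 // => j _; move: (h0 j); rewrite negbK => /eqP ->; rewrite mulr0.
by rewrite E /e0 eqxx mulr1 => /eqP; rewrite (negbTE r0).
Qed.

Lemma conj_repNK A r b x i : scaled_unitary A r ->
  ev (conj_rep A (- b)) (ev (conj_rep A b) x) i
  = r ^+ 3 * lin (conjtr A) x ord0 ^+ 3 * x i.
Proof.
move=> [r0 [h1 h2]]; set y := lin (conjtr A) x.
rewrite !ev_conj_rep lin_mulmx h2 lin_scalar faZ faNK.
rewrite (_ : (fun j => _) = fun j => r ^+ 2 * y ord0 ^+ 3 * y j); last first.
  by apply: boolp.funext => j; rewrite mulrA.
by rewrite linZ /y lin_mulmx h1 lin_scalar exprS; ring.
Qed.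

Lemma birational_conj_rep A r a : scaled_unitary A r -> birational (conj_rep A a).
Proof.
move=> hA; have [r0 _] := hA; have [Ee0 [j hj]] := ev_conj_rep_e0 a hA.
have inv b : comp_is_id (conj_rep A (- b)) (conj_rep A b).
  split; first by move=> x i k; rewrite !(conj_repNK _ _ _ hA); ring.
  exists (lin A e0), j; rewrite (conj_repNK _ _ _ hA) lin_mulmx.
  by rewrite (proj2 (proj2 hA)) lin_scalar /e0 eqxx mulr1 !mulf_neq0 ?expf_neq0.
split.
  by apply: (@ev_neq0_coef _ (lin A e0) j); rewrite Ee0 mulf_neq0 ?expf_neq0.
exists (conj_rep A (- a)); split; first exact: inv.
by have := inv (- a); rewrite opprK.
Qed.

Lemma ev_conj_rep0 A r x i : scaled_unitary A r ->
  ev (conj_rep A 0) x i = r * lin (conjtr A) x ord0 * x i.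
Proof.
move=> [r0 [h1 _]]; rewrite ev_conj_rep fa0 linZ lin_mulmx h1 lin_scalar /=.
by rewrite mulrCA mulrA.
Qed.

Lemma same_map_conj_rep0 A B r s : scaled_unitary A r -> scaled_unitary B s ->
  same_map (conj_rep A 0) (conj_rep B 0).
Proof.
move=> hA hB x i j.
by rewrite (ev_conj_rep0 _ _ hA) (ev_conj_rep0 _ _ hA) !(ev_conj_rep0 _ _ hB); ring.
Qed.

Lemma conjf_conj_rep M Q r s t : scaled_unitary M r -> scaled_unitary Q s ->
  exists2 mu : C, mu != 0 & forall x i,
    conjf (invmx M *m Q) t x i = mu * ev (conj_rep (conjtr M *m Q) (t * (1 - t))%:C) x i.
Proof.
move=> hM hQ; set A := conjtr M *m Q.
have hA : scaled_unitary A (r * s) by apply: scaled_unitaryM => //; apply: scaled_unitary_conjtr.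
have [r0 _] := hM; have ri0 : r^-1 != 0 by rewrite invr_eq0.
have EM : invmx M *m Q = r^-1 *: A by rewrite (scaled_unitary_invmx hM) -scalemxAl.
have hrA := scaled_unitaryZ hA ri0.
set k := _ * _ * (r * s) in hrA; have [k0 _] := hrA.
exists (r^-1 * (k^-1 * Num.conj r^-1) ^+ 2).
  by rewrite !mulf_neq0 ?expf_neq0 ?mulf_neq0 ?invr_eq0 ?conjC_eq0.
move=> x i; rewrite /conjf EM (scaled_unitary_invmx hrA) conjtrZ scalerA.
by rewrite !lin_scalemx fmapE faZ linZ ev_conj_rep mulrA.
Qed.

End Birationality.

Section JointContinuity.
Variable R : realType.
Local Notation C := R[i].
Variables (Q0 : 'M[C]_3) (t0 : R).

Definition near_param (d : R) (Q : 'M[C]_3) (t : R) :=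
  (forall i j, normc (Q i j - Q0 i j) < d) /\ `|t - t0| < d.

Definition cont_at (f : 'M[C]_3 -> R -> C) := forall e : R, 0 < e ->
  exists2 d : R, 0 < d & forall Q t, near_param d Q t -> normc (f Q t - f Q0 t0) < e.

Lemma near_param_le d d' Q t : d <= d' -> near_param d Q t -> near_param d' Q t.
Proof.
move=> dd' [hQ ht]; split; last exact: lt_le_trans dd'.
by move=> i j; apply: lt_le_trans dd'.
Qed.

Lemma cont_at_both f g e : cont_at f -> cont_at g -> 0 < e ->
  exists2 d : R, 0 < d & forall Q t, near_param d Q t ->
    normc (f Q t - f Q0 t0) < e /\ normc (g Q t - g Q0 t0) < e.
Proof.
move=> hf hg e0; have [df df0 hdf] := hf e e0; have [dg dg0 hdg] := hg e e0.
exists (Num.min df dg); first by rewrite lt_min df0 dg0.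
move=> Q t hQt; split; [apply: hdf | apply: hdg];
  by apply: near_param_le hQt; rewrite ge_min lexx ?orbT.
Qed.

Lemma cont_at_ext f g : (forall Q t, f Q t = g Q t) -> cont_at g -> cont_at f.
Proof.
move=> E hg e e0; have [d d0 hd] := hg e e0.
by exists d => // Q t hQt; rewrite !E; apply: hd.
Qed.

Lemma cont_at_const c : cont_at (fun _ _ => c).
Proof. by move=> e e0; exists 1 => // Q t _; rewrite subrr normc0. Qed.

Lemma cont_at_entry i j : cont_at (fun Q _ => Q i j).
Proof. by move=> e e0; exists e => // Q t [hQ _]; apply: hQ. Qed.

Lemma cont_at_param : cont_at (fun _ t => t%:C).
Proof. by move=> e e0; exists e => // Q t [_ ht]; rewrite -rmorphB normc_real. Qed.

Lemma cont_at_conj f : cont_at f -> cont_at (fun Q t => Num.conj (f Q t)).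
Proof.
move=> hf e e0; have [d d0 hd] := hf e e0.
by exists d => // Q t hQt; rewrite -rmorphB normc_conj; apply: hd.
Qed.

Lemma cont_at_opp f : cont_at f -> cont_at (fun Q t => - f Q t).
Proof.
move=> hf e e0; have [d d0 hd] := hf e e0.
by exists d => // Q t hQt; rewrite -opprD normcN; apply: hd.
Qed.

Lemma cont_at_add f g : cont_at f -> cont_at g -> cont_at (fun Q t => f Q t + g Q t).
Proof.
move=> hf hg e e0; have e2 : 0 < e / 2 by lra.
have [d d0 hd] := cont_at_both hf hg e2.
exists d => // Q t /hd [hf' hg']; rewrite opprD addrACA.
by apply: le_lt_trans (le_normcD _ _) _; lra.
Qed.

Lemma cont_at_mul f g : cont_at f -> cont_at g -> cont_at (fun Q t => f Q t * g Q t).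
Proof.
move=> hf hg e e0; set a := normc (f Q0 t0); set b := normc (g Q0 t0).
have a0 : 0 <= a := normc_ge0 _; have b0 : 0 <= b := normc_ge0 _.
set eta := Num.min 1 (e / (a + b + 1)).
have eta0 : 0 < eta by rewrite lt_min ltr01 divr_gt0 //; lra.
have eta1 : eta <= 1 by rewrite ge_min lexx.
have etae : eta * (a + b + 1) <= e.
  by rewrite -ler_pdivlMr ?ge_min ?lexx ?orbT //; lra.
have [d d0 hd] := cont_at_both hf hg eta0.
exists d => // Q t /hd [hf' hg'].
rewrite (_ : _ - _ = (f Q t - f Q0 t0) * g Q t + f Q0 t0 * (g Q t - g Q0 t0)); last by ring.
apply: le_lt_trans (le_normcD _ _) _; rewrite !normcM -/a.
have hgb : normc (g Q t) <= b + normc (g Q t - g Q0 t0).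
  by rewrite -[g Q t in X in X <= _](subrK (g Q0 t0)) addrC; apply: le_normcD.
have := normc_ge0 (f Q t - f Q0 t0); have := normc_ge0 (g Q t - g Q0 t0).
nra.
Qed.

Lemma cont_at_sum (I : finType) (F : I -> 'M[C]_3 -> R -> C) :
  (forall k, cont_at (F k)) -> cont_at (fun Q t => \sum_k F k Q t).
Proof.
move=> hF; suff hs (s : seq I) : cont_at (fun Q t => \sum_(k <- s) F k Q t) by exact: hs.
elim: s => [|k s IH].
  by apply: (@cont_at_ext _ (fun _ _ => 0)) => [Q t|]; [rewrite big_nil | exact: cont_at_const].
apply: (@cont_at_ext _ (fun Q t => F k Q t + \sum_(k <- s) F k Q t)) => [Q t|].
  by rewrite big_cons.
exact: cont_at_add.
Qed.

Lemma cont_at_mulmx_entry (M : 'M[C]_3) i j : cont_at (fun Q _ => (M *m Q) i j).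
Proof.
apply: (@cont_at_ext _ (fun Q _ => \sum_k M i k * Q k j)) => [Q t|]; first by rewrite mxE.
by apply: cont_at_sum => k; apply: cont_at_mul; [exact: cont_at_const | exact: cont_at_entry].
Qed.

Lemma cont_at_conjtr_entry (M : 'M[C]_3) i j :
  cont_at (fun Q _ => conjtr (M *m Q) i j).
Proof.
apply: (@cont_at_ext _ (fun Q _ => Num.conj ((M *m Q) j i))) => [Q t|].
  by rewrite !mxE.
exact/cont_at_conj/cont_at_mulmx_entry.
Qed.

Lemma cont_at_prod_coefs (u w : 'M[C]_3 -> R -> 'I_3 -> C) m :
  (forall i, cont_at (fun Q t => u Q t i)) -> (forall i, cont_at (fun Q t => w Q t i)) ->
  cont_at (fun Q t => prod_coefs (u Q t) (w Q t) m).
Proof.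
move=> hu hw; apply: cont_at_sum => i; apply: cont_at_sum => j.
by case: (mon2 i j == m); [exact: cont_at_mul | exact: cont_at_const].
Qed.

Lemma cont_at_conj_trip (M : 'M[C]_3) (p : 'I_3 * mon 2) :
  cont_at (fun Q t => coords (conj_trip (M *m Q) (t * (1 - t))%:C) p).
Proof.
have hB k : forall i, cont_at (fun Q (_ : R) => conjtr (M *m Q) k i).
  by move=> i; apply: cont_at_conjtr_entry.
have ha : cont_at (fun _ t => (t * (1 - t))%:C).
  apply: (@cont_at_ext _ (fun _ t => t%:C * (1 + - t%:C))) => [Q t|].
    by rewrite rmorphM rmorphB rmorph1.
  apply: cont_at_mul; first exact: cont_at_param.
  by apply: cont_at_add; [exact: cont_at_const | exact/cont_at_opp/cont_at_param].
apply: cont_at_add.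
  apply: cont_at_sum => k; apply: cont_at_mul; first exact: cont_at_mulmx_entry.
  exact: cont_at_prod_coefs.
apply: cont_at_mul; last exact: cont_at_prod_coefs.
by apply: cont_at_mul; [exact: ha | exact: cont_at_mulmx_entry].
Qed.

End JointContinuity.

Section RealTopology.
Variable R : realType.

Lemma sin_bound (x : R) : -1 <= sin x <= 1.
Proof. by rewrite -ler_norml sin_max. Qed.

Lemma normr_max_sub (s t s' t' e : R) : `|s' - s| < e -> `|t' - t| < e ->
  `|Num.max s' t' - Num.max s t| < e.
Proof.
rewrite !ltr_norml => /andP [a1 a2] /andP [b1 b2].
by case: (ltP s' t') => h1; case: (ltP s t) => h2; apply/andP; split; lra.
Qed.

Lemma sin_inv_cont_at (m : R) : 0 < m -> forall e, 0 < e ->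
  exists2 d, 0 < d & forall t, `|t - m| < d -> `|sin t^-1 - sin m^-1| < e.
Proof.
move=> m0 e e0.
have hc : {for m, continuous (fun t : R => sin t^-1)}.
  apply: (@continuous_comp _ _ _ (fun t : R => t^-1) sin).
    by apply: inv_continuous; rewrite gt_eqF.
  exact: continuous_sin.
have [d /= d0 hd] := (nbhs_ballP _ _).1 ((cvgrPdist_lt _ _).1 hc e e0).
by exists d => // t ht; rewrite distrC; apply: hd; rewrite /ball /= distrC.
Qed.

Lemma compact_tube (K : set R) (P : R -> R -> Prop) : compact K ->
  (forall x, K x -> exists2 e, 0 < e & forall x' s, `|x' - x| < e -> `|s| < e -> P s x') ->
  exists2 e, 0 < e & forall s, `|s| < e -> forall x, K x -> P s x.
Proof.
move=> /compact_near_coveringP cK h.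
have : \forall s \near nbhs (0 : R), (K `<=` P s)%classic.
  apply: (cK R (nbhs 0) P) => x Kx; have [e e0 he] := h x Kx.
  exists (ball x e, ball 0 e) => /=; first by split; apply: nbhsx_ballx.
  case=> x' s [/= hx hs]; apply: he; first by rewrite distrC.
  by move: hs; rewrite /ball /= sub0r normrN.
move=> /(nbhs_ballP _ _).1 [e /= e0 he]; exists e => // s hs x Kx.
by apply: (he s) => //; rewrite /ball /= sub0r normrN.
Qed.

Lemma exists_common_radius (I : finType) (P : I -> R -> Prop) :
  (forall i e e', 0 < e' -> e' <= e -> P i e -> P i e') ->
  (forall i, exists2 e, 0 < e & P i e) -> exists2 e, 0 < e & forall i, P i e.
Proof.
move=> mono h.
suff [e e0 he] : exists2 e, 0 < e & forall i, i \in enum I -> P i e.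
  by exists e => // i; apply: he; rewrite mem_enum.
elim: (enum I) => [|k s [e e0 IH]]; first by exists 1.
have [ek ek0 hk] := h k; have m0 : 0 < Num.min e ek by rewrite lt_min e0 ek0.
exists (Num.min e ek) => // i; rewrite in_cons => /orP [/eqP ->|hi].
  by apply: (mono _ ek) => //; rewrite ge_min lexx orbT.
by apply: (mono _ e) => //; [rewrite ge_min lexx | apply: IH].
Qed.

End RealTopology.

Lemma cont_at_conj_trip_coords (R : realType) (M Q0 : 'M[R[i]]_3) (t0 e : R) : 0 < e ->
  exists2 d, 0 < d & forall Q t, near_param Q0 t0 d Q t -> forall p,
    normc (coords (conj_trip (M *m Q) (t * (1 - t))%:C) p
           - coords (conj_trip (M *m Q0) (t0 * (1 - t0))%:C) p) < e.
Proof.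
move=> e0.
pose P p d := forall Q t, near_param Q0 t0 d Q t ->
  normc (coords (conj_trip (M *m Q) (t * (1 - t))%:C) p
         - coords (conj_trip (M *m Q0) (t0 * (1 - t0))%:C) p) < e.
have [d d0 hd] : exists2 d, 0 < d & forall p, P p d.
  apply: exists_common_radius => [p a a' _ aa' h Q t /(near_param_le aa')|p].
    exact: h.
  exact: cont_at_conj_trip.
by exists d => // Q t hQt p; apply: hd.
Qed.

Section ProjectiveBall.
Variables (R : realType) (I : finType) (v0 : I -> R[i]) (d : R).

Definition proj_ball (v : I -> R[i]) :=
  exists2 c, c != 0 & forall p, normc (c * v p - v0 p) < d.

Lemma proj_ball_center : 0 < d -> proj_ball v0.
Proof.
by move=> d0; exists 1; rewrite ?oner_eq0 // => p; rewrite mul1r subrr normc0.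
Qed.

Lemma proj_ball_open p0 : 0 < d -> d <= normc (v0 p0) -> proj_open proj_ball.
Proof.
move=> d0 dp0; split; [|split].
- move=> v [c c0 hc]; exists p0; apply/negP => /eqP vp0.
  by move: (hc p0); rewrite vp0 mulr0 sub0r normcN => /lt_le_trans /(_ dp0); rewrite ltxx.
- move=> v c' c'0 [c c0 hc]; exists (c / c'); first by rewrite mulf_neq0 ?invr_eq0.
  by move=> p; rewrite mulrA divfK //; apply: hc.
- move=> v [c c0 hc].
  have [eta eta0 heta] : exists2 eta, 0 < eta & forall p, normc (c * v p - v0 p) + eta < d.
    apply: exists_common_radius => [p a a' _ aa' h|p].
      by apply: le_lt_trans h; rewrite lerD2l.
    by exists ((d - normc (c * v p - v0 p)) / 2); have := hc p; lra.
  have nc0 : 0 < normc c + 1 by have := normc_ge0 c; lra.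
  exists (eta / (normc c + 1))%:C; split; first by rewrite ltcR divr_gt0.
  move=> w hw; exists c => // p.
  move: (hw p); rewrite ltc_norm ltr_pdivlMr // => hwp.
  rewrite (_ : _ - _ = c * (w p - v p) + (c * v p - v0 p)); last by ring.
  apply: le_lt_trans (le_normcD _ _) _; rewrite normcM.
  have := heta p; have := normc_ge0 (w p - v p); have := normc_ge0 c; nra.
Qed.

End ProjectiveBall.

Section BirTopology.
Variable R : realType.
Implicit Types (U : BirRep R -> Prop) (A B : 'M[R[i]]_3).

Lemma bir_open_conj_rep U A r a : bir_open U -> scaled_unitary A r -> U (conj_rep A a) ->
  exists2 e, 0 < e & forall B s b, scaled_unitary B s ->
    (forall p, normc (coords (conj_trip B b) p - coords (conj_trip A a) p) < e) ->
    U (conj_rep B b).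
Proof.
move=> [_ Uch] hA UA; have [O [vO hO]] := Uch 2%N.
have [e [e0 he]] := vO _ ((hO _ (birational_conj_rep a hA)).1 UA).
have [Ee e'0] := gt0_complex e0; rewrite Ee in he.
exists (complex.Re e) => // B s b hB hclose.
by apply/(hO _ (birational_conj_rep b hB)); apply: he => p; rewrite ltc_norm.
Qed.

Lemma bir_open_conj_repZ U A r c a : bir_open U -> scaled_unitary A r -> c != 0 ->
  U (conj_rep (c *: A) a) -> U (conj_rep A a).
Proof.
move=> [Usat _] hA c0; apply: Usat.
- exact: birational_conj_rep _ (scaled_unitaryZ hA c0).
- exact: birational_conj_rep _ hA.
- by apply: (@same_map_scale _ _ _ (c * Num.conj c ^+ 2)) => x i; rewrite ev_conj_repZ.
Qed.

Lemma bir_cont2_same_map (g h : R -> R -> BirRep R) : bir_cont2 g ->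
  (forall s t, 0 <= s <= 1 -> 0 <= t <= 1 -> birational (h s t) /\ same_map (h s t) (g s t)) ->
  bir_cont2 h.
Proof.
move=> [bg cg] hgh; split=> [s t hs ht|U hU s t hs ht Uh]; first by case: (hgh s t hs ht).
have [Usat _] := hU; have [bh ghs] := hgh s t hs ht.
have [e [e0 he]] := cg U hU s t hs ht (Usat _ _ bh (bg s t hs ht) ghs Uh).
exists e; split => // s' t' hs' ht' hss' htt'; have [bh' ghs'] := hgh s' t' hs' ht'.
exact: Usat _ _ (bg s' t' hs' ht') bh' (same_map_sym ghs') (he s' t' hs' ht' hss' htt').
Qed.

Lemma bir_cont2_slice (g : R -> R -> BirRep R) : bir_cont2 g -> bir_cont_on 0 1 (g 0).
Proof.
have h01 : 0 <= (0 : R) <= 1 by rewrite lexx ler01.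
move=> [bg cg]; split=> [t ht|U hU t ht Ut]; first exact: bg.
have [e [e0 he]] := cg U hU 0 t h01 ht Ut.
by exists e; split => // t' ht'; apply: he; rewrite // subrr normr0.
Qed.

End BirTopology.

Section Homotopy.
Variables (R : realType) (sigma : R -> 'M[R[i]]_3).
Hypothesis sigma_path : psu_path sigma.

Let M0 := conjtr (sigma (sin 1)).

Definition conj_sigma (y t : R) := conj_rep (M0 *m sigma y) (t * (1 - t))%:C.

Lemma scaled_unitary_conj_sigma y : -1 <= y <= 1 -> exists r, scaled_unitary (M0 *m sigma y) r.
Proof.
move=> hy; have [r1 h1] := psu_scaled_unitary (sigma_path.1 _ (sin_bound 1)).
have [r2 h2] := psu_scaled_unitary (sigma_path.1 _ hy).
by exists (r1 * r2); apply: scaled_unitaryM => //; apply: scaled_unitary_conjtr.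
Qed.

Lemma birational_conj_sigma y t : -1 <= y <= 1 -> birational (conj_sigma y t).
Proof. by case/scaled_unitary_conj_sigma => r /birational_conj_rep; apply. Qed.

(* [sigma] is only continuous into [P^8]: for [y'] near [y], some rescaling
   [c sigma y'] is close to [sigma y], and rescaling does not change the map. *)
Lemma conj_sigma_cont U y t : bir_open U -> -1 <= y <= 1 -> U (conj_sigma y t) ->
  exists2 e, 0 < e & forall y' t', -1 <= y' <= 1 -> `|y' - y| < e -> `|t' - t| < e ->
    U (conj_sigma y' t').
Proof.
move=> hU hy Uyt; have [r hA] := scaled_unitary_conj_sigma hy.
have [e e0 he] := bir_open_conj_rep hU hA Uyt.
have [d1 d10 hd1] := cont_at_conj_trip_coords M0 (sigma y) t e0.
have [rs hs] := psu_scaled_unitary (sigma_path.1 _ hy).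
have [p0 hp0] := scaled_unitary_neq0 hs.
set d := Num.min d1 (normc (mcoords (sigma y) p0)).
have d0 : 0 < d by rewrite lt_min d10 lt_def normc_eq0 hp0 normc_ge0.
have dd1 : d <= d1 by rewrite ge_min lexx.
have dp0 : d <= normc (mcoords (sigma y) p0) by rewrite ge_min lexx orbT.
have [e' [e'0 he']] := sigma_path.2.1 _ (proj_ball_open d0 dp0)
  y hy (proj_ball_center _ d0).
exists (Num.min d e') => [|y' t' hy']; first by rewrite lt_min d0 e'0.
rewrite !lt_min => /andP [_ hye'] /andP [/andP [htd _] _].
have [c c0 hc] := he' y' hy' hye'; have [r' hA'] := scaled_unitary_conj_sigma hy'.
apply: (bir_open_conj_repZ hU hA' c0); apply: he; first exact: scaled_unitaryZ hA' c0.
rewrite scalemxAr; apply: hd1; split => // i j.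
by rewrite mxE; apply: lt_le_trans (hc (i, j)) dd1.
Qed.

Definition id_rep : BirRep R := conj_rep 1%:M 0.

Lemma birational_id_rep : birational id_rep.
Proof. exact: birational_conj_rep _ (scaled_unitary1 R). Qed.

Lemma same_map_conj_sigma0 y : -1 <= y <= 1 -> same_map (conj_sigma y 0) id_rep.
Proof.
case/scaled_unitary_conj_sigma => r hA.
by rewrite /conj_sigma mul0r rmorph0; apply: same_map_conj_rep0 hA (scaled_unitary1 R).
Qed.

Lemma conj_sigma_near0 U : bir_open U -> U id_rep ->
  exists2 e, 0 < e & forall y t, -1 <= y <= 1 -> `|t| < e -> U (conj_sigma y t).
Proof.
move=> hU Uid; have [Usat _] := hU.
have [|e e0 he] := @compact_tube R `[-1, 1]%classic (fun t y => -1 <= y <= 1 -> U (conj_sigma y t))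
  (@segment_compact R (-1) 1).
  move=> y; rewrite /= in_itv /= => hy.
  have U0 : U (conj_sigma y 0).
    by apply: Usat (same_map_sym (same_map_conj_sigma0 hy)) Uid;
      [exact: birational_id_rep | exact: birational_conj_sigma].
  have [e e0 he] := conj_sigma_cont hU hy U0.
  exists e => [//|y' t hy' ht hy'']; apply: he => //.
  by rewrite subr0.
by exists e => // y t hy ht; apply: (he t ht y) => //=; rewrite in_itv.
Qed.

(* [homot s t] represents [sighat(m) f_t sighat(m)^-1] with [m = max(s, t)]. *)
Definition homot (s t : R) : BirRep R :=
  if 0 < Num.max s t then conj_sigma (sin (Num.max s t)^-1) t else id_rep.

Lemma birational_homot s t : birational (homot s t).
Proof.
rewrite /homot; case: ifP => _; last exact: birational_id_rep.
exact/birational_conj_sigma/sin_bound.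
Qed.

Lemma homot_le s t : 0 <= s <= t -> homot s t = homot 0 t.
Proof. by case/andP => s0 st; rewrite /homot !max_r // (le_trans s0 st). Qed.

Lemma homot_ge s t : 0 < s -> t <= s -> homot s t = conj_sigma (sin s^-1) t.
Proof. by move=> s0 ts; rewrite /homot max_l // s0. Qed.

Lemma homot_cont_pos U s t : bir_open U -> 0 < Num.max s t -> U (homot s t) ->
  exists2 e, 0 < e & forall s' t', `|s' - s| < e -> `|t' - t| < e -> U (homot s' t').
Proof.
rewrite /homot => hU m0; rewrite m0 => Ust.
have [e1 e10 he1] := conj_sigma_cont hU (sin_bound _) Ust.
have [d d0 hd] := sin_inv_cont_at m0 e10.
exists (Num.min d (Num.min e1 (Num.max s t))); first by rewrite !lt_min d0 e10 m0.
move=> s' t'; rewrite !lt_min => /andP [hs1 /andP [hs2 hs3]] /andP [ht1 /andP [ht2 ht3]].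
have := normr_max_sub hs3 ht3; rewrite ltr_norml => /andP [m'0 _].
have -> : 0 < Num.max s' t' by lra.
by apply: he1 => //; [exact: sin_bound | apply: hd; exact: normr_max_sub].
Qed.

Lemma homot_cont_origin U : bir_open U -> U (homot 0 0) ->
  exists2 e, 0 < e & forall s' t', `|t'| < e -> U (homot s' t').
Proof.
rewrite /homot maxxx ltxx => hU Uid; have [e e0 he] := conj_sigma_near0 hU Uid.
by exists e => // s' t' ht'; case: ifP => _ //; apply: he; first exact: sin_bound.
Qed.

Lemma homot_cont : bir_cont2 homot.
Proof.
split=> [s t _ _|U hU s t /andP [s0 _] /andP [t0 _] Ust]; first exact: birational_homot.
have [m0|] := ltP 0 (Num.max s t).
  have [e e0 he] := homot_cont_pos hU m0 Ust.
  exists e; split => [//|s' t' _ _ hs ht]; exact: he hs ht.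
rewrite ge_max => /andP [s0' t0']; have s00 : s = 0 by lra.
have t00 : t = 0 by lra.
move: Ust; rewrite s00 t00 => /(homot_cont_origin hU) [e e0 he].
by exists e; split => // s' t' _ _ _; rewrite subr0; apply: he.
Qed.

Lemma conjf_conj_sigma s t : exists2 mu, mu != 0 &
  forall x i, conjf (sighat sigma s) t x i = mu * ev (conj_sigma (sin s^-1) t) x i.
Proof.
have [r1 h1] := psu_scaled_unitary (sigma_path.1 _ (sin_bound 1)).
have [r2 h2] := psu_scaled_unitary (sigma_path.1 _ (sin_bound s^-1)).
exact: conjf_conj_rep t h1 h2.
Qed.

Lemma homot_same_as s t : 0 < s -> t <= s -> same_as (homot s t) (conjf (sighat sigma s) t).
Proof.
move=> s0 ts; rewrite homot_ge //; have [mu _ hmu] := conjf_conj_sigma s t.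
by move=> x i j; rewrite !hmu; ring.
Qed.

Lemma same_map_homot s t F : 0 < s -> t <= s ->
  same_as F (conjf (sighat sigma s) t) -> same_map F (homot s t).
Proof.
move=> s0 ts; rewrite homot_ge //; have [mu mu0 hmu] := conjf_conj_sigma s t.
exact: same_as_same_map mu0 hmu.
Qed.

Lemma homot00_id : same_as (homot 0 0) id.
Proof.
rewrite /homot maxxx ltxx => x i j.
by rewrite /id_rep !(ev_conj_rep0 _ _ (scaled_unitary1 R)); ring.
Qed.

Lemma conjf_sighat1 t : conjf (sighat sigma 1) t = fmap t.
Proof.
have [r h] := psu_scaled_unitary (sigma_path.1 _ (sin_bound 1)).
apply: boolp.funext => x.
by rewrite /conjf /sighat invr1 mulVmx ?(scaled_unitary_unit h) // invmx1 !lin1.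
Qed.

End Homotopy.

Theorem lemma5p2 (R : realType) (sigma : R -> 'M[R[i]]_3) :
  psu_path sigma ->
  exists rhohat : R -> BirRep R,
    bir_cont_on 0 1 rhohat /\
    (forall t, 0 < t <= 1 -> same_as (rhohat t) (conjf (sighat sigma t) t)) /\
    same_as (rhohat 0) id /\
    (forall H : R -> R -> BirRep R,
       (forall s t, 0 <= s <= 1 -> 0 <= t <= 1 ->
          birational (H s t) /\
          (s <= t -> same_map (H s t) (rhohat t)) /\
          (t < s -> same_as (H s t) (conjf (sighat sigma s) t))) ->
       bir_cont2 H) /\
    (exists H : R -> R -> BirRep R,
       bir_cont2 H /\
       forall t, 0 <= t <= 1 ->
         same_map (H 0 t) (rhohat t) /\ same_as (H 1 t) (fmap t)).
Proof.
move=> hsigma; have hom := homot_cont hsigma.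
exists (homot sigma 0); split; [|split; [|split; [|split]]].
- exact: bir_cont2_slice.
- move=> t /andP [t0 _].
  have <- : homot sigma t t = homot sigma 0 t by rewrite homot_le ?lexx ?ltW.
  by apply: (homot_same_as hsigma t0).
- exact: homot00_id.
- move=> H hH; apply: bir_cont2_same_map hom _ => s t hs ht.
  have [bH [Hle Hgt]] := hH s t hs ht; split => //.
  have [st|ts] := leP s t.
    by rewrite homot_le ?(andP hs).1 ?st //; exact: Hle.
  apply: (same_map_homot hsigma _ (ltW ts) (Hgt ts)).
  exact: le_lt_trans (andP ht).1 ts.
- exists (homot sigma); split => // t /andP [_ t1]; split; first exact: same_map_refl.
  by rewrite -(conjf_sighat1 hsigma t); apply: (homot_same_as hsigma ltr01 t1).
Qed.
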